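(* Let $p$ be an odd prime, $q\in\mathbb{C}_p$ with $|q-1|_p<1$, $\alpha\in\mathbb{N}\cup\{0\}$, $h\in\mathbb{N}$, and let $n_1,n_2,k$ be nonnegative integers with $n_1+n_2>2k$. Then \[ \sum_{l=0}^{n_1+n_2-2k}\binom{n_1+n_2-2k}{l}(-1)^l\frac{\widetilde{G}_{l+2k+1,q}^{(\alpha,h)}}{l+2k+1}=\begin{cases}[2]_q+q^{h+1}\dfrac{\widetilde{G}_{n_1+n_2+1,q^{-1}}^{(\alpha,h)}}{n_1+n_2+1} & \text{if } k=0,\\[2mm] \displaystyle\sum_{l=0}^{2k}\binom{2k}{l}(-1)^{2k+l}\Big\{[2]_q+q^{h+1}\frac{\widetilde{G}_{n_1+n_2-l+1,q^{-1}}^{(\alpha,h)}}{n_1+n_2-l+1}\Big\} & \text{if } k\neq 0.\end{cases} \]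
   Context: For $x\in\mathbb{Z}_p$ write $[x]_q=\frac{1-q^x}{1-q}$, and $[2]_q=1+q$. For a uniformly differentiable $f:\mathbb{Z}_p\to\mathbb{C}_p$, the fermionic $p$-adic $q$-integral is $\int_{\mathbb{Z}_p}f(\xi)\,d\mu_{-q}(\xi)=\lim_{N\to\infty}\frac{1}{[p^N]_{-q}}\sum_{\xi=0}^{p^N-1}f(\xi)(-q)^{\xi}$, with $[p^N]_{-q}=\frac{1+q^{p^N}}{1+q}$. The $(h,q)$-Genocchi polynomials with weight $\alpha$ are defined for $n\ge0$, $x\in\mathbb{Z}_p$ by $\frac{\widetilde{G}_{n+1,q}^{(\alpha,h)}(x)}{n+1}=\int_{\mathbb{Z}_p}q^{(h-1)\xi}[x+\xi]_{q^{\alpha}}^n\,d\mu_{-q}(\xi)$, and the numbers are $\widetilde{G}_{n,q}^{(\alpha,h)}=\widetilde{G}_{n,q}^{(\alpha,h)}(0)$. The numbers $\widetilde{G}_{n,q^{-1}}^{(\alpha,h)}$ are obtained by replacing $q$ by $q^{-1}$ everywhere: $\frac{\widetilde{G}_{n+1,q^{-1}}^{(\alpha,h)}}{n+1}=\int_{\mathbb{Z}_p}q^{(1-h)\xi}[\xi]_{q^{-\alpha}}^n\,d\mu_{-q^{-1}}(\xi)$. *)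

From HB Require Import structures.
From mathcomp Require Import all_boot all_order all_algebra.
From mathcomp Require Import boolp classical_sets reals.
Set Implicit Arguments. Unset Strict Implicit. Unset Printing Implicit Defensive.
Import Order.TTheory GRing.Theory Num.Theory.
Local Open Scope ring_scope.

(* A model of C_p: an algebraically closed field K with an absolute value
   [abs : K -> R] that is non-archimedean, complete, and restricts on the
   integers to the p-adic absolute value |n|_p = p^(-v_p(n)). *)
Record padic_abs (p : nat) (R : realType) (K : closedFieldType)
    (abs : K -> R) : Prop := PadicAbs {
  abs_ge0 : forall x, 0 <= abs x;
  abs0 : abs 0 = 0;
  abs_eq0 : forall x, abs x = 0 -> x = 0;
  absM : forall x y, abs (x * y) = abs x * abs y;
  abs_ultra : forall x y, abs (x + y) <= Num.max (abs x) (abs y);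
  abs_nat : forall n : nat, (0 < n)%N -> abs (n%:R) = (p%:R : R) ^- logn p n;
  abs_complete : forall u : nat -> K,
    (forall eps : R, 0 < eps -> exists N : nat, forall m n : nat,
        (N <= m)%N -> (N <= n)%N -> abs (u m - u n) < eps) ->
    exists L : K, forall eps : R, 0 < eps -> exists N : nat, forall n : nat,
        (N <= n)%N -> abs (u n - L) < eps
}.

Section Defs.
Variables (R : realType) (K : closedFieldType) (abs : K -> R).

Definition abs_cvg (u : nat -> K) (L : K) : Prop :=
  forall eps : R, 0 < eps -> exists N : nat, forall n : nat,
    (N <= n)%N -> abs (u n - L) < eps.

(* the limit (a chosen one if it exists, 0 otherwise) *)
Definition abs_lim (u : nat -> K) : K := xget 0 (abs_cvg u).

(* q-number [n]_a = 1 + a + ... + a^(n-1) = (1 - a^n)/(1 - a) for natural n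
   (and = n when a = 1) *)
Definition qnum (a : K) (n : nat) : K := \sum_(i < n) a ^+ i.

Definition fqint (p : nat) (q : K) (f : nat -> K) : K :=
  abs_lim (fun N => (\sum_(xi < p ^ N) f xi * (- q) ^+ xi) / qnum (- q) (p ^ N)).

(* (h,q)-Genocchi numbers with weight alpha:
   G_{n+1} = (n+1) * int q^{(h-1)xi} [xi]_{q^alpha}^n dmu_{-q}; G_0 unused (:= 0) *)
Definition Gnum (p : nat) (q : K) (alpha h : nat) (n : nat) : K :=
  match n with
  | 0 => 0
  | m.+1 => m.+1%:R *
      fqint p q (fun xi => q ^+ ((h - 1) * xi) * qnum (q ^+ alpha) xi ^+ m)
  end.
End Defs.

From HB Require Import structures.
From mathcomp Require Import all_boot all_order all_algebra.
From mathcomp Require Import boolp classical_sets reals.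
From mathcomp Require Import ring lra zify.
Import Order.TTheory GRing.Theory Num.Theory.
Local Open Scope ring_scope.
Set Implicit Arguments. Unset Strict Implicit. Unset Printing Implicit Defensive.

(* The fermionic integral is the limit of the means [qmean q f (p ^ n)].  For an
   integrand with a p-adic modulus of continuity these means converge: consecutive
   means differ by at most the modulus or [|[p ^ n]_q|], and [|[p ^ n]_q| -> 0]
   when [|q - 1| < 1].  The heart of the proof is a reflection formula, valid for
   every self-map [Q] of the unit ball that is 1-Lipschitz:
     int q^((h-1)xi) Q(1 - [xi]_(q^alpha)) dmu_(-q)
       = [2]_q (Q 1 - q^h Q 0) + q^(h+1) int q^((1-h)xi) Q([xi]_(q^-alpha)) dmu_(-q^-1).
   After reversing the order of summation in the right-hand mean, its [i]-th term
   agrees with the [(i+2)]-th term on the left up to [|[p^n]_q|] and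
   [|[p^n]_(q^alpha)|], and the four unmatched terms at the two ends add up to the
   boundary term.  Taking [Q y = (1 - y)^(2k) y^(n1+n2-2k)] and expanding both sides
   binomially gives the theorem; for [k <> 0] we have [Q 1 = 0], and the added
   [[2]_q] summands cancel because [sum_l C(2k, l) (-1)^l = 0]. *)

Section QNumbers.
Variable K : closedFieldType.
Implicit Types (x : K) (f g : nat -> K).

Lemma qnum0 x : qnum x 0 = 0.
Proof. exact: big_ord0. Qed.

Lemma qnumS x n : qnum x n.+1 = 1 + x * qnum x n.
Proof.
by rewrite /qnum big_ord_recl expr0 mulr_sumr; under eq_bigr do rewrite exprS.
Qed.

Lemma qnumSr x n : qnum x n.+1 = qnum x n + x ^+ n.
Proof. exact: big_ord_recr. Qed.

Lemma qnumD x m n : qnum x (m + n) = qnum x m + x ^+ m * qnum x n.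
Proof.
elim: n => [|n IH]; first by rewrite addn0 qnum0 mulr0 addr0.
by rewrite addnS !qnumSr IH mulrDr addrA exprD.
Qed.

Lemma qnumM x m n : qnum x (m * n) = qnum x m * qnum (x ^+ m) n.
Proof.
elim: n => [|n IH]; first by rewrite muln0 !qnum0 mulr0.
by rewrite mulnS addnC qnumD IH qnumSr mulrDr -exprM mulnC; ring.
Qed.

Lemma subrX1_qnum x n : x ^+ n - 1 = (x - 1) * qnum x n.
Proof. exact: subrX1. Qed.

Lemma qnumV x n : x != 0 -> x ^+ n * qnum x^-1 n = x * qnum x n.
Proof.
move=> x0; elim: n => [|n IH]; first by rewrite !qnum0 !mulr0.
rewrite qnumSr mulrDr exprS -mulrA IH qnumS exprVn.
by field; rewrite expf_neq0.
Qed.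

Lemma qnumV_compl x m j : x != 0 ->
  x ^+ (m + j) * qnum x^-1 m = qnum x (m + j).+1 - qnum x j.+1.
Proof.
move=> x0; rewrite exprD mulrAC qnumV // -addnS addnC qnumD exprS; ring.
Qed.

Lemma qnumN_odd x n : odd n -> (1 + x) * qnum (- x) n = 1 + x ^+ n.
Proof.
move=> n_odd; have := subrX1_qnum (- x) n.
rewrite exprNn -signr_odd n_odd expr1 => e.
have -> : 1 + x = - (- x - 1) by ring.
by rewrite mulNr -e; ring.
Qed.

Lemma sum_ord_mul (F : nat -> K) m N :
  \sum_(i < m * N) F i = \sum_(j < m) \sum_(x < N) F (j * N + x)%N.
Proof.
elim: m => [|m IH]; first by rewrite mul0n !big_ord0.
by rewrite big_ord_recr /= -IH mulSnr big_split_ord.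
Qed.

Lemma sum_signr m : \sum_(j < m) (-1 : K) ^+ j = (odd m)%:R.
Proof.
elim: m => [|m IH]; first by rewrite big_ord0.
by rewrite big_ord_recr /= IH -signr_odd; case: (odd m); rewrite /= ?expr1 ?expr0; ring.
Qed.

Definition qmean (q : K) f N : K :=
  (\sum_(xi < N) f xi * (- q) ^+ xi) / qnum (- q) N.

Lemma qmeanV q g N : q != 0 -> qmean q^-1 g N = qmean q (fun eta => g (N - eta.+1)%N) N.
Proof.
move=> q0.
have rev (h : nat -> K) : (- q) ^+ N.-1 * (\sum_(xi < N) h xi * (- q^-1) ^+ xi)
    = \sum_(eta < N) h (N - eta.+1)%N * (- q) ^+ eta.
  rewrite (reindex_inj rev_ord_inj) /= mulr_sumr; apply: eq_bigr => i _.
  have -> : N.-1 = ((N - i.+1) + i)%N by have := ltn_ord i; lia.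
  rewrite exprD -invrN exprVn; field.
  by rewrite expf_neq0 // oppr_eq0.
have qN0 : (- q) ^+ N.-1 != 0 by rewrite expf_neq0 // oppr_eq0.
have den : (- q) ^+ N.-1 * qnum (- q^-1) N = qnum (- q) N.
  have := rev (fun=> 1); rewrite /qnum.
  under eq_bigr do rewrite mul1r.
  by under [in RHS]eq_bigr do rewrite mul1r.
by rewrite /qmean -rev -den invfM mulrACA mulfV // mul1r.
Qed.

Lemma qmean_sum (I : Type) (r : seq I) (c : I -> K) (g : I -> nat -> K) q N :
  qmean q (fun xi => \sum_(i <- r) c i * g i xi) N = \sum_(i <- r) c i * qmean q (g i) N.
Proof.
rewrite /qmean; under eq_bigr do rewrite mulr_suml.
rewrite exchange_big mulr_suml; apply: eq_bigr => i _.
by rewrite mulrA mulr_sumr; congr (_ / _); apply: eq_bigr => xi _; rewrite mulrA.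
Qed.

Definition qweighted (b a : K) (h : nat) (Q : K -> K) (xi : nat) : K :=
  b ^+ (h * xi) * Q (qnum a xi).

Lemma exprX_mul1sub (y : K) m n :
  y ^+ m * (1 - y) ^+ n = \sum_(l < n.+1) 'C(n, l)%:R * (-1) ^+ l * y ^+ (l + m).
Proof.
rewrite exprBn mulr_sumr; apply: eq_bigr => l _.
by rewrite expr1n mulr1 exprD -mulr_natl; ring.
Qed.

Lemma expr1sub_mulX (y : K) m n : (1 - y) ^+ m * y ^+ n
  = \sum_(l < m.+1) 'C(m, l)%:R * (-1) ^+ (m + l) * y ^+ (n + m - l).
Proof.
have -> : 1 - y = -1 * (y - 1) by ring.
rewrite exprMn exprBn !mulr_sumr mulr_suml; apply: eq_bigr => l _.
rewrite -addnBA ?leq_ord // !exprD expr1n mulr1 -mulr_natl; ring.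
Qed.

Lemma sum_binom_signr m : (0 < m)%N ->
  \sum_(l < m.+1) 'C(m, l)%:R * (-1) ^+ (m + l) = 0 :> K.
Proof.
move=> m_gt0; transitivity (\sum_(l < m.+1) 'C(m, l)%:R * (-1) ^+ (m + l) * (1 : K) ^+ (0 + m - l)).
  by apply: eq_bigr => l _; rewrite expr1n mulr1.
by rewrite -expr1sub_mulX subrr expr0n gtn_eqF // mul0r.
Qed.

End QNumbers.

Section Vanishing.
Variable R : archiRealFieldType.
Implicit Types e : nat -> R.

Definition vanishing e := forall eps : R, 0 < eps ->
  exists N, forall n, (N <= n)%N -> e n < eps.

Lemma vanishing_le e e' : (forall n, e' n <= e n) -> vanishing e -> vanishing e'.
Proof. by move=> le_e e0 eps /e0[N eN]; exists N => n /eN; apply: le_lt_trans. Qed.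

Lemma vanishing_max e e' : vanishing e -> vanishing e' ->
  vanishing (fun n => Num.max (e n) (e' n)).
Proof.
move=> e0 e'0 eps eps_gt0.
have [[N eN] [N' e'N]] := (e0 _ eps_gt0, e'0 _ eps_gt0).
by exists (maxn N N') => n; rewrite geq_max gt_max => /andP[/eN -> /e'N ->].
Qed.

Lemma bernoulli_ineq (s : R) n : 0 <= s -> 1 + n%:R * s <= (1 + s) ^+ n.
Proof.
move=> s_ge0; elim: n => [|n IH]; first by rewrite mul0r addr0 expr0.
rewrite exprS -natr1 mulrDl mul1r.
have : 0 <= n%:R * s by rewrite mulr_ge0.
nra.
Qed.

Lemma vanishing_expr (r : R) : 0 <= r -> r < 1 -> vanishing (fun n => r ^+ n).
Proof.
move=> r_ge0 r_lt1 eps eps_gt0.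
have [->|r_neq0] := eqVneq r 0.
  by exists 1%N => -[|n] //; rewrite expr0n.
have r_gt0 : 0 < r by rewrite lt_def r_neq0.
pose s := r^-1 - 1.
have s_gt0 : 0 < s by rewrite subr_gt0 invf_gt1.
have rs : r * (1 + s) = 1 by rewrite /s addrC subrK mulfV.
have bound_ge0 : 0 <= (s * eps)^-1 by rewrite invr_ge0 ltW ?mulr_gt0.
exists (Num.Def.archi_bound (s * eps)^-1) => n n_large.
have ns_gt : 1 < n%:R * s * eps.
  rewrite -mulrA -ltr_pdivrMr ?mulr_gt0 // mul1r.
  by apply: lt_le_trans (archi_boundP bound_ge0) _; rewrite ler_nat.
have rn_ns : r ^+ n * (n%:R * s) <= 1.
  have rsn : r ^+ n * (1 + s) ^+ n = 1 by rewrite -exprMn rs expr1n.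
  have := bernoulli_ineq n (ltW s_gt0); have := exprn_ge0 n r_ge0; nra.
have ns_gt0 : 0 < n%:R * s by nra.
by rewrite -(ltr_pM2r ns_gt0); nra.
Qed.

End Vanishing.

Section PadicAbs.
Variables (p : nat) (R : realType) (K : closedFieldType) (abs : K -> R).
Hypothesis habs : padic_abs p abs.
Hypothesis p_prime : prime p.
Hypothesis p_odd : odd p.
Implicit Types (x y : K) (c : R).

Lemma abs1 : abs 1 = 1.
Proof. by have := abs_nat habs (n := 1) isT; rewrite logn1 expr0 invr1. Qed.

Lemma absN1 : abs (-1) = 1.
Proof.
have sq1 : abs (-1) * abs (-1) = 1 by rewrite -(absM habs) mulrNN mulr1 abs1.
by have := abs_ge0 habs (-1); nra.
Qed.

Lemma absN x : abs (- x) = abs x.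
Proof. by rewrite -mulN1r (absM habs) absN1 mul1r. Qed.

Lemma absX x n : abs (x ^+ n) = abs x ^+ n.
Proof. by elim: n => [|n IH]; rewrite ?expr0 ?abs1 // !exprS (absM habs) IH. Qed.

Lemma abs1_neq0 x : abs x = 1 -> x != 0.
Proof. by move=> x1; apply: contra_eq_neq x1 => ->; rewrite (abs0 habs) eq_sym oner_eq0. Qed.

Lemma absV x : abs x^-1 = (abs x)^-1.
Proof.
have [->|x0] := eqVneq x 0; first by rewrite invr0 (abs0 habs) invr0.
have absx0 : abs x != 0 by apply: contra_neq x0 => /(abs_eq0 habs).
by apply: (mulfI absx0); rewrite -(absM habs) !mulfV // abs1.
Qed.

Lemma abs_add_le x y c : abs x <= c -> abs y <= c -> abs (x + y) <= c.
Proof. by move=> xc yc; apply: le_trans (abs_ultra habs x y) _; rewrite ge_max xc. Qed.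

Lemma abs_add_lt x y c : abs x < c -> abs y < c -> abs (x + y) < c.
Proof. by move=> xc yc; apply: le_lt_trans (abs_ultra habs x y) _; rewrite gt_max xc. Qed.

Lemma abs_sub_le x y c : abs x <= c -> abs y <= c -> abs (x - y) <= c.
Proof. by move=> xc yc; apply: abs_add_le; rewrite ?absN. Qed.

Lemma abs_sum_le (I : Type) (r : seq I) (P : pred I) (F : I -> K) c :
  0 <= c -> (forall i, P i -> abs (F i) <= c) -> abs (\sum_(i <- r | P i) F i) <= c.
Proof.
move=> c_ge0 Fc; apply: (big_ind (fun z => abs z <= c)) => //.
- by rewrite (abs0 habs).
- by move=> u v; apply: abs_add_le.
Qed.

Lemma abs_mulr_le x y c : abs x <= 1 -> abs y <= c -> abs (x * y) <= c.
Proof.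
by rewrite (absM habs); have := abs_ge0 habs x; have := abs_ge0 habs y; nra.
Qed.

Lemma abs_mull_le x y c : abs y <= 1 -> abs x <= c -> abs (x * y) <= c.
Proof. by rewrite mulrC; apply: abs_mulr_le. Qed.

Lemma abs_expr_le1 x n : abs x <= 1 -> abs (x ^+ n) <= 1.
Proof. by rewrite absX => x1; rewrite exprn_ile1 // (abs_ge0 habs). Qed.

Lemma abs_mulB_le x y x' y' c : abs x <= 1 -> abs y' <= 1 ->
  abs (x - x') <= c -> abs (y - y') <= c -> abs (x * y - x' * y') <= c.
Proof.
move=> x1 y'1 xc yc.
have -> : x * y - x' * y' = x * (y - y') + (x - x') * y' by ring.
by apply: abs_add_le; [apply: abs_mulr_le | apply: abs_mull_le].
Qed.

Lemma abs_add_strict x y : abs y < abs x -> abs (x + y) = abs x.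
Proof.
move=> yx; have ub : abs (x + y) <= abs x by apply: abs_add_le; rewrite // ltW.
apply/eqP; rewrite eq_le ub /=.
have := abs_ultra habs (x + y) (- y); rewrite addrK absN le_max.
by case/orP=> // /(lt_le_trans yx); rewrite ltxx.
Qed.

Lemma abs_near1 x : abs (x - 1) < 1 -> abs x = 1.
Proof. by move=> x1; rewrite -[x](subrK 1) addrC abs_add_strict abs1. Qed.

Lemma abs_inv_sub1 x : abs x = 1 -> abs (x^-1 - 1) = abs (x - 1).
Proof.
move=> x1; have x0 := abs1_neq0 x1.
have -> : x^-1 - 1 = x^-1 * (- (x - 1)) by field.
by rewrite (absM habs) absV x1 invr1 mul1r absN.
Qed.

Lemma abs_near1V x : abs (x - 1) < 1 -> abs (x^-1 - 1) < 1.
Proof. by move=> x1; rewrite abs_inv_sub1 // abs_near1. Qed.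

Lemma abs_natS_neq0 n : n.+1%:R != 0 :> K.
Proof.
apply/eqP => n0; have := abs_nat habs (n := n.+1) isT.
rewrite n0 (abs0 habs) => /esym/eqP; rewrite invr_eq0 expf_eq0 pnatr_eq0.
by rewrite (gtn_eqF (prime_gt0 p_prime)) andbF.
Qed.

Lemma abs_p_lt1 : abs p%:R < 1.
Proof.
rewrite (abs_nat habs) ?prime_gt0 // (lognE p p) p_prime dvdnn prime_gt0 //= divnn prime_gt0 //.
by rewrite logn1 expr1 invf_lt1 ?ltr1n ?ltr0n ?prime_gt1 ?prime_gt0.
Qed.

Lemma abs2 : abs 2 = 1.
Proof.
have p_gt2 : (2 < p)%N by have := prime_gt1 p_prime; case: p p_odd => [|[|[|]]].
by rewrite (abs_nat habs (n := 2)) // lognE gtnNdvd // !andbF expr0 invr1.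
Qed.

Lemma abs_1add_near1 x : abs (x - 1) < 1 -> abs (1 + x) = 1.
Proof.
move=> x1; have -> : 1 + x = 2 + (x - 1) by ring.
by rewrite abs_add_strict abs2.
Qed.

Lemma abs_qnum_le1 x n : abs x <= 1 -> abs (qnum x n) <= 1.
Proof. by move=> x1; apply: abs_sum_le => // i _; apply: abs_expr_le1. Qed.

Lemma abs_qnumV a n : abs a = 1 -> abs (qnum a^-1 n) = abs (qnum a n).
Proof.
move=> a1; have := congr1 abs (qnumV n (abs1_neq0 a1)).
by rewrite !(absM habs) absX a1 expr1n !mul1r.
Qed.

Lemma abs_subX1_qnum x n : abs (x - 1) <= 1 -> abs (x ^+ n - 1) <= abs (qnum x n).
Proof. by rewrite subrX1_qnum => x1; apply: abs_mulr_le. Qed.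

Lemma abs_subX1 x n : abs x <= 1 -> abs (x ^+ n - 1) <= abs (x - 1).
Proof. by move=> x1; rewrite subrX1_qnum abs_mull_le ?abs_qnum_le1. Qed.

Lemma abs_subXX x y n : abs x <= 1 -> abs y <= 1 -> abs (x ^+ n - y ^+ n) <= abs (x - y).
Proof.
move=> x1 y1; rewrite subrXX abs_mull_le //.
by apply: abs_sum_le => // i _; apply: abs_mulr_le; apply: abs_expr_le1.
Qed.

Lemma abs_subX1_mul a N j : abs (a - 1) < 1 -> abs (a ^+ (j * N) - 1) <= abs (qnum a N).
Proof.
move=> a1; have absa := abs_near1 a1.
rewrite mulnC exprM; apply: le_trans (abs_subX1 _ _) (abs_subX1_qnum _ (ltW a1)).
by rewrite absX absa expr1n.
Qed.

Lemma abs_qnum_shift a N j n : abs (a - 1) < 1 ->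
  abs (qnum a (j * N + n) - qnum a n) <= abs (qnum a N).
Proof.
move=> a1; have absa := abs_near1 a1.
rewrite qnumD mulnC qnumM.
have -> : qnum a N * qnum (a ^+ N) j + a ^+ (N * j) * qnum a n - qnum a n
    = qnum a N * qnum (a ^+ N) j + (a ^+ (N * j) - 1) * qnum a n by ring.
apply: abs_add_le; first by rewrite abs_mull_le ?abs_qnum_le1 ?absX ?absa ?expr1n.
by rewrite abs_mull_le ?abs_qnum_le1 ?absa // mulnC abs_subX1_mul.
Qed.

Lemma abs_qnum_reflect a j k n : abs (a - 1) < 1 -> (0 < j)%N -> (j + k = n.+1)%N ->
  abs ((1 - qnum a j) - qnum a^-1 k) <= abs (qnum a n).
Proof.
move=> a1 j_gt0 jk; have absa := abs_near1 a1; have a0 := abs1_neq0 absa.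
have -> : qnum a^-1 k = (a^-1) ^+ n * (qnum a n.+1 - qnum a j).
  case: j j_gt0 jk => // j _ jk; have kj : (k + j = n)%N by lia.
  apply: (mulfI (expf_neq0 n a0)).
  by rewrite mulrA -exprMn mulfV // expr1n mul1r -kj qnumV_compl.
set B := qnum a n.+1 - qnum a j.
have -> : 1 - qnum a j - (a^-1) ^+ n * B = - (a * qnum a n) + (1 - (a^-1) ^+ n) * B.
  by rewrite /B qnumS; ring.
apply: abs_add_le; first by rewrite absN abs_mulr_le ?absa.
apply: abs_mull_le; first by apply: abs_sub_le; rewrite abs_qnum_le1 ?absa.
rewrite -absN opprB -(abs_qnumV _ absa); apply: abs_subX1_qnum.
exact/ltW/abs_near1V.
Qed.

Lemma abs_qnumN_odd b N : abs (b - 1) < 1 -> odd N -> abs (qnum (- b) N) = 1.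
Proof.
move=> b1 N_odd; have absb : abs b <= 1 by rewrite abs_near1.
have bN1 : abs (1 + b ^+ N) = 1.
  by apply: abs_1add_near1; apply: le_lt_trans (abs_subX1 _ absb) b1.
by have := congr1 abs (qnumN_odd b N_odd); rewrite (absM habs) abs_1add_near1 // mul1r bN1.
Qed.

(* [|[p]_c| <= max |p| |c - 1|] because [[p]_c = p + sum_(i < p) (c ^ i - 1)]. *)
Lemma vanishing_qnum_expn b : abs (b - 1) < 1 -> vanishing (fun n => abs (qnum b (p ^ n))).
Proof.
move=> b1; set r := Num.max (abs (p%:R : K)) (abs (b - 1)).
have r_ge0 : 0 <= r by rewrite le_max (abs_ge0 habs).
have r_lt1 : r < 1 by rewrite gt_max b1 abs_p_lt1.
have absb : abs b <= 1 by rewrite abs_near1.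
apply: (vanishing_le _ (vanishing_expr r_ge0 r_lt1)); elim=> [|n IH].
  by rewrite expn0 expr0 qnumS qnum0 mulr0 addr0 abs1.
rewrite expnSr qnumM (absM habs) exprSr ler_pM ?(abs_ge0 habs) //.
have -> : qnum (b ^+ (p ^ n)) p = \sum_(i < p) (b ^+ (p ^ n) ^+ i - 1) + p%:R.
  by rewrite sumrB sumr_const card_ord subrK.
apply: abs_add_le; last by rewrite le_max lexx.
apply: abs_sum_le => // i _; rewrite -exprM.
by apply: le_trans (abs_subX1 _ absb) _; rewrite le_max lexx orbT.
Qed.

Lemma abs_cvg_uniq u L1 L2 : abs_cvg abs u L1 -> abs_cvg abs u L2 -> L1 = L2.
Proof.
move=> uL1 uL2; apply/eqP; rewrite -subr_eq0; apply/negP => /negP L12.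
have d_gt0 : 0 < abs (L1 - L2).
  by rewrite lt_def (abs_ge0 habs) andbT; apply: contra L12 => /eqP/(abs_eq0 habs)->.
have [[N1 HN1] [N2 HN2]] := (uL1 _ d_gt0, uL2 _ d_gt0).
pose n := maxn N1 N2.
have split_n : L1 - L2 = (u n - L2) - (u n - L1) by ring.
have : abs (L1 - L2) < abs (L1 - L2).
  by rewrite {1}split_n; apply: abs_add_lt; rewrite ?absN ?HN1 ?HN2 ?leq_maxl ?leq_maxr.
by rewrite ltxx.
Qed.

Lemma abs_limE u L : abs_cvg abs u L -> abs_lim abs u = L.
Proof. by move=> uL; apply: (abs_cvg_uniq (u := u)) => //; apply: xgetPex; exists L. Qed.

Lemma abs_cvg_lim u : (exists L, abs_cvg abs u L) -> abs_cvg abs u (abs_lim abs u).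
Proof. by move=> [L uL]; rewrite (abs_limE uL). Qed.

Lemma abs_cvg_cst x : abs_cvg abs (fun=> x) x.
Proof. by move=> eps eps_gt0; exists 0%N => n _; rewrite subrr (abs0 habs). Qed.

Lemma abs_cvgD u v L M : abs_cvg abs u L -> abs_cvg abs v M ->
  abs_cvg abs (fun n => u n + v n) (L + M).
Proof.
move=> uL vM eps eps_gt0; have [[N1 HN1] [N2 HN2]] := (uL _ eps_gt0, vM _ eps_gt0).
exists (maxn N1 N2) => n; rewrite geq_max => /andP[n1 n2].
by rewrite opprD addrACA; apply: abs_add_lt; [apply: HN1 | apply: HN2].
Qed.

Lemma abs_cvgZ u L x : abs_cvg abs u L -> abs_cvg abs (fun n => x * u n) (x * L).
Proof.
have [->|x0] := eqVneq x 0.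
  by move=> _; under eq_fun do rewrite mul0r; rewrite mul0r; apply: abs_cvg_cst.
have absx_gt0 : 0 < abs x.
  by rewrite lt_def (abs_ge0 habs) andbT; apply: contra x0 => /eqP/(abs_eq0 habs)->.
move=> uL eps eps_gt0; have [N HN] := uL _ (divr_gt0 eps_gt0 absx_gt0).
by exists N => n /HN; rewrite -mulrBr (absM habs) ltr_pdivlMr // mulrC.
Qed.

Lemma abs_cvg_sum (I : Type) (r : seq I) (F : I -> nat -> K) (L : I -> K) :
  (forall i, abs_cvg abs (F i) (L i)) ->
  abs_cvg abs (fun n => \sum_(i <- r) F i n) (\sum_(i <- r) L i).
Proof.
move=> FL; elim: r => [|i r IH].
  by under eq_fun do rewrite big_nil; rewrite big_nil; apply: abs_cvg_cst.
by under eq_fun do rewrite big_cons; rewrite big_cons; apply: abs_cvgD.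
Qed.

Lemma abs_cvg0_le u e : vanishing e -> (forall n, (0 < n)%N -> abs (u n) <= e n) ->
  abs_cvg abs u 0.
Proof.
move=> e0 ue eps /e0[N HN]; exists N.+1 => n Nn; rewrite subr0.
by apply: le_lt_trans (ue _ (leq_ltn_trans (leq0n N) Nn)) (HN _ (ltnW Nn)).
Qed.

(* Ultrametric: steps tending to zero make the sequence Cauchy. *)
Lemma abs_cvg_steps u e : vanishing e -> (forall n, abs (u n.+1 - u n) <= e n) ->
  exists L, abs_cvg abs u L.
Proof.
move=> e0 step; apply: (abs_complete habs) => eps eps_gt0.
have [N HN] := e0 _ eps_gt0.
have from_N k : abs (u (N + k)%N - u N) < eps.
  elim: k => [|k IH]; first by rewrite addn0 subrr (abs0 habs).
  have -> : u (N + k.+1)%N - u N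
      = (u (N + k).+1 - u (N + k)%N) + (u (N + k)%N - u N) by rewrite addnS; ring.
  by apply: abs_add_lt => //; apply: le_lt_trans (step _) (HN _ (leq_addr _ _)).
exists N => m n mN nN.
have -> : u m - u n = (u (N + (m - N))%N - u N) - (u (N + (n - N))%N - u N).
  by rewrite !subnKC //; ring.
by apply: abs_add_lt; rewrite ?absN from_N.
Qed.

Section FermionicRiemannSums.
Variables (b : K) (f : nat -> K) (d : nat -> R).
Hypothesis b_near1 : abs (b - 1) < 1.
Hypothesis f_le1 : forall xi, abs (f xi) <= 1.
Hypothesis f_mod : forall n j xi, abs (f (j * p ^ n + xi)%N - f xi) <= d n.

Let absb : abs b = 1. Proof. exact: abs_near1. Qed.

Lemma abs_wsum_le1 N : abs (\sum_(xi < N) f xi * (- b) ^+ xi) <= 1.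
Proof.
apply: abs_sum_le => // xi _; apply: abs_mull_le => //.
by rewrite absX absN absb expr1n.
Qed.

Lemma abs_wsum_step n :
  abs (\sum_(xi < p ^ n.+1) f xi * (- b) ^+ xi - \sum_(xi < p ^ n) f xi * (- b) ^+ xi)
  <= Num.max (d n) (abs (qnum b (p ^ n))).
Proof.
set N := (p ^ n)%N; set c := b ^+ N; set e := Num.max _ _.
have N_odd : odd N by rewrite oddX p_odd orbT.
have c1 : abs (c - 1) <= e.
  by apply: le_trans (abs_subX1_qnum _ (ltW b_near1)) _; rewrite le_max lexx orbT.
(* Compare block by block with [p] alternating copies of the level-[n] sum. *)
have -> : \sum_(xi < N) f xi * (- b) ^+ xi
    = \sum_(j < p) \sum_(xi < N) (-1) ^+ j * (f xi * (- b) ^+ xi).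
  by under [in RHS]eq_bigr do rewrite -mulr_sumr; rewrite -mulr_suml sum_signr p_odd mul1r.
rewrite expnSr mulnC (sum_ord_mul (fun xi => f xi * (- b) ^+ xi)) -sumrB.
apply: abs_sum_le => [|j _]; first by rewrite le_max (abs_ge0 habs) orbT.
rewrite -sumrB; apply: abs_sum_le => [|xi _]; first by rewrite le_max (abs_ge0 habs) orbT.
have -> : (- b) ^+ (j * N + xi) = (-1) ^+ j * c ^+ j * (- b) ^+ xi.
  have bN : (- b) ^+ N = -1 * c by rewrite exprNn -signr_odd N_odd expr1.
  by rewrite exprD mulnC exprM bN exprMn.
set sgn := (-1) ^+ j * (- b) ^+ xi.
have sgn1 : abs sgn <= 1 by rewrite (absM habs) !absX absN1 absN absb !expr1n mulr1.
have -> : f (j * N + xi)%N * ((-1) ^+ j * c ^+ j * (- b) ^+ xi) - (-1) ^+ j * (f xi * (- b) ^+ xi)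
    = sgn * (f (j * N + xi)%N * c ^+ j - f xi * 1) by rewrite /sgn; ring.
apply: abs_mulr_le => //; apply: abs_mulB_le; rewrite ?abs1 //.
  by apply: le_trans (f_mod n j xi) _; rewrite le_max lexx.
by apply: le_trans (abs_subX1 _ _) c1; rewrite absX absb expr1n.
Qed.

Lemma abs_qnumN_step n :
  abs (qnum (- b) (p ^ n.+1) - qnum (- b) (p ^ n)) <= abs (qnum b (p ^ n)).
Proof.
have odd_pexp m : odd (p ^ m) by rewrite oddX p_odd orbT.
have : (1 + b) * (qnum (- b) (p ^ n.+1) - qnum (- b) (p ^ n))
    = (b ^+ (p ^ n.+1) - 1) - (b ^+ (p ^ n) - 1).
  by rewrite mulrBr !qnumN_odd //; ring.
move/(congr1 abs); rewrite (absM habs) abs_1add_near1 // mul1r => ->.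
have bN1 : abs (b ^+ (p ^ n) - 1) <= abs (qnum b (p ^ n)).
  by apply: abs_subX1_qnum; apply: ltW.
apply: abs_sub_le => //; rewrite expnSr exprM; apply: le_trans (abs_subX1 _ _) bN1.
by rewrite absX absb expr1n.
Qed.

Lemma abs_qmean_step n : abs (qmean b f (p ^ n.+1) - qmean b f (p ^ n))
  <= Num.max (d n) (abs (qnum b (p ^ n))).
Proof.
have odd_pexp m : odd (p ^ m) by rewrite oddX p_odd orbT.
have [D1 D0] := (abs_qnumN_odd b_near1 (odd_pexp n.+1), abs_qnumN_odd b_near1 (odd_pexp n)).
rewrite /qmean; set T1 := \sum_(_ < _) _; set T0 := \sum_(_ < _) _.
set Q1 := qnum _ _; set Q0 := qnum _ _.
have [Q1_neq0 Q0_neq0] := (abs1_neq0 D1, abs1_neq0 D0).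
have -> : T1 / Q1 - T0 / Q0 = ((T1 - T0) * Q0 - T0 * (Q1 - Q0)) / (Q1 * Q0).
  by field; rewrite Q1_neq0 Q0_neq0.
rewrite (absM habs) absV (absM habs) D1 D0 mulr1 invr1 mulr1.
apply: abs_sub_le; first by rewrite abs_mull_le ?D0 // abs_wsum_step.
apply: abs_mulr_le; first exact: abs_wsum_le1.
by apply: le_trans (abs_qnumN_step n) _; rewrite le_max lexx orbT.
Qed.

Lemma qmean_cvg : vanishing d -> exists L, abs_cvg abs (fun n => qmean b f (p ^ n)) L.
Proof.
move=> d0; apply: (abs_cvg_steps _ abs_qmean_step).
by apply: vanishing_max => //; apply: vanishing_qnum_expn.
Qed.

End FermionicRiemannSums.

Definition unit_nonexpansive (Q : K -> K) :=
  (forall x, abs x <= 1 -> abs (Q x) <= 1) /\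
  (forall x y, abs x <= 1 -> abs y <= 1 -> abs (Q x - Q y) <= abs (x - y)).

Lemma nonexpansiveX m : unit_nonexpansive (fun y => y ^+ m).
Proof. by split=> [x|x y]; [apply: abs_expr_le1 | apply: abs_subXX]. Qed.

Lemma nonexpansiveM Q1 Q2 : unit_nonexpansive Q1 -> unit_nonexpansive Q2 ->
  unit_nonexpansive (fun y => Q1 y * Q2 y).
Proof.
move=> [Q1_le1 Q1_lip] [Q2_le1 Q2_lip]; split=> [x x1|x y x1 y1].
  by apply: abs_mulr_le; [apply: Q1_le1 | apply: Q2_le1].
by apply: abs_mulB_le; [apply: Q1_le1 | apply: Q2_le1 | apply: Q1_lip | apply: Q2_lip].
Qed.

Lemma nonexpansive_1sub Q : unit_nonexpansive Q -> unit_nonexpansive (fun y => Q (1 - y)).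
Proof.
have sub1 x : abs x <= 1 -> abs (1 - x) <= 1 by move=> x1; apply: abs_sub_le; rewrite ?abs1.
move=> [Q_le1 Q_lip]; split=> [x /sub1/Q_le1 //|x y x1 y1].
have -> : x - y = - (1 - x - (1 - y)) by ring.
by rewrite absN; apply: Q_lip; apply: sub1.
Qed.

Definition qerr (b a : K) N := Num.max (abs (qnum b N)) (abs (qnum a N)).

Lemma qerr_ge0 b a N : 0 <= qerr b a N.
Proof. by rewrite le_max (abs_ge0 habs). Qed.

Lemma vanishing_qerr b a : abs (b - 1) < 1 -> abs (a - 1) < 1 ->
  vanishing (fun n => qerr b a (p ^ n)).
Proof. by move=> b1 a1; apply: vanishing_max; apply: vanishing_qnum_expn. Qed.

Lemma qweighted_cvg b a h Q : abs (b - 1) < 1 -> abs (a - 1) < 1 -> unit_nonexpansive Q ->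
  exists L, abs_cvg abs (fun n => qmean b (qweighted b a h Q) (p ^ n)) L.
Proof.
move=> b1 a1 [Q_le1 Q_lip]; have [absb absa] := (abs_near1 b1, abs_near1 a1).
have bX m : abs (b ^+ m) = 1 by rewrite absX absb expr1n.
have qnum_le1 m : abs (qnum a m) <= 1 by rewrite abs_qnum_le1 ?absa.
apply: (qmean_cvg (d := fun n => qerr b a (p ^ n))) => //; last exact: vanishing_qerr.
  by move=> xi; rewrite abs_mulr_le ?bX ?Q_le1.
move=> n j xi; apply: abs_mulB_le; rewrite ?bX ?Q_le1 //.
  rewrite mulnDr exprD -[X in _ - X]mul1r -mulrBl abs_mull_le ?bX //.
  rewrite mulnCA mulnA; apply: le_trans (abs_subX1_mul _ _ b1) _.
  by rewrite /qerr le_max lexx.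
apply: le_trans (Q_lip _ _ (qnum_le1 _) (qnum_le1 _)) _.
by apply: le_trans (abs_qnum_shift _ _ _ a1) _; rewrite /qerr le_max lexx orbT.
Qed.

Section Reflection.
Variables (b a : K) (h : nat) (Q : K -> K).
Hypotheses (b_near1 : abs (b - 1) < 1) (a_near1 : abs (a - 1) < 1).
Hypothesis Q_ne : unit_nonexpansive Q.

Let fL := qweighted b a h (fun y => Q (1 - y)).
Let fR := qweighted b^-1 a^-1 h Q.
Let absb : abs b = 1. Proof. exact: abs_near1. Qed.
Let absa : abs a = 1. Proof. exact: abs_near1. Qed.
Let b0 : b != 0. Proof. exact: abs1_neq0. Qed.
Let qnum_aV_le1 n : abs (qnum a^-1 n) <= 1.
Proof. by rewrite abs_qnumV // abs_qnum_le1 ?absa. Qed.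

Lemma reflect_term j k n : (0 < j)%N -> (j + k = n.+1)%N ->
  abs (fL j - b ^+ h * fR k) <= qerr b a n.
Proof.
move=> j_gt0 jk; have [Q_le1 Q_lip] := Q_ne.
have weight : b ^+ h * (b^-1) ^+ (h * k) = b ^+ (h * j) * (b^-1) ^+ (h * n).
  rewrite !exprVn; apply/eqP; rewrite eqr_div ?expf_neq0 // -!exprD.
  by rewrite -mulnS -mulnDr jk.
have factor (u v w z : K) : u * v - u * w * z = u * (1 * v - w * z) by ring.
rewrite /fL /fR /qweighted mulrA weight factor.
apply: abs_mulr_le; first by rewrite absX absb expr1n.
apply: abs_mulB_le; rewrite ?abs1 ?Q_le1 //.
- rewrite -absN opprB.
  apply: le_trans (abs_subX1_mul n h (abs_near1V b_near1)) _.
  by rewrite abs_qnumV // /qerr le_max lexx.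
- apply: le_trans (Q_lip _ _ _ (qnum_aV_le1 k)) _.
    by apply: abs_sub_le; rewrite ?abs1 ?abs_qnum_le1 ?absa.
  by apply: le_trans (abs_qnum_reflect a_near1 j_gt0 jk) _; rewrite /qerr le_max lexx orbT.
Qed.

(* After pairing [xi = i + 2] with [eta = i], the four unpaired boundary terms
   add up exactly to [(1 + b ^+ N) * (Q 1 - b ^+ h.+1 * Q 0)]. *)
Lemma reflect_wsum_split M : odd M ->
  \sum_(xi < M.+2) fL xi * (- b) ^+ xi - (1 + b ^+ M.+2) * (Q 1 - b ^+ h.+1 * Q 0)
    - b ^+ h.+2 * \sum_(eta < M.+2) fR (M.+2 - eta.+1)%N * (- b) ^+ eta
  = \sum_(i < M) (- b) ^+ i * b ^+ 2 * (fL i.+2 - b ^+ h * fR (M.+1 - i)%N).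
Proof.
move=> M_odd.
have [fL0 fL1] : fL 0 = Q 1 /\ fL 1 = b ^+ h * Q 0.
  by rewrite /fL /qweighted muln0 muln1 qnumS !qnum0 mulr0 addr0 subr0 subrr expr0 mul1r.
have [fR0 fR1] : fR 0 = Q 0 /\ fR 1 = (b ^+ h)^-1 * Q 1.
  by rewrite /fR /qweighted muln0 muln1 qnumS !qnum0 mulr0 addr0 expr0 mul1r exprVn.
have bM : (- b) ^+ M = - b ^+ M by rewrite exprNn -signr_odd M_odd expr1 mulN1r.
rewrite 2!big_ord_recl 2!big_ord_recr /= subnn subSn // subnn.
rewrite /bump /= fL0 fL1 fR0 fR1 [(- b) ^+ M.+1]exprSr bM expr0 expr1.
set S1 := \sum_(i < M) _; set S2 := \sum_(i < M) _.
transitivity (S1 - b ^+ h.+2 * S2).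
  by rewrite !exprS; field; rewrite expf_neq0.
rewrite /S1 /S2 mulr_sumr -sumrB; apply: eq_bigr => i _.
rewrite subSS !exprS; ring.
Qed.

Lemma reflect_wsum_le M : odd M ->
  abs (\sum_(xi < M.+2) fL xi * (- b) ^+ xi - (1 + b ^+ M.+2) * (Q 1 - b ^+ h.+1 * Q 0)
       - b ^+ h.+2 * \sum_(eta < M.+2) fR (M.+2 - eta.+1)%N * (- b) ^+ eta)
  <= qerr b a M.+2.
Proof.
move=> M_odd; rewrite reflect_wsum_split //.
apply: abs_sum_le => [|i _]; first exact: qerr_ge0.
apply: abs_mulr_le; first by rewrite (absM habs) !absX absN absb !expr1n mulr1.
by apply: reflect_term => //; have := ltn_ord i; lia.
Qed.

Lemma reflect_qmean_le N : odd N -> (1 < N)%N ->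
  abs (qmean b fL N - (1 + b) * (Q 1 - b ^+ h.+1 * Q 0) - b ^+ h.+2 * qmean b^-1 fR N)
  <= qerr b a N.
Proof.
case: N => [|[|M]] // N_odd _; rewrite (qmeanV _ _ b0) /qmean.
have M_odd : odd M by move: N_odd => /= /negPn.
have D1 := abs_qnumN_odd b_near1 N_odd.
set D := qnum (- b) M.+2; set A := \sum_(_ < _) _; set B := \sum_(_ < _) _.
have -> : A / D - (1 + b) * (Q 1 - b ^+ h.+1 * Q 0) - b ^+ h.+2 * (B / D)
    = (A - (1 + b ^+ M.+2) * (Q 1 - b ^+ h.+1 * Q 0) - b ^+ h.+2 * B) / D.
  by rewrite -(qnumN_odd b N_odd) -/D; field; apply: abs1_neq0.
by rewrite (absM habs) absV D1 invr1 mulr1 reflect_wsum_le.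
Qed.

Theorem fqint_reflect :
  fqint abs p b fL = (1 + b) * (Q 1 - b ^+ h.+1 * Q 0) + b ^+ h.+2 * fqint abs p b^-1 fR.
Proof.
set c := (1 + b) * _.
have [L cvgL] := qweighted_cvg h b_near1 a_near1 (nonexpansive_1sub Q_ne).
have [M cvgM] := qweighted_cvg h (abs_near1V b_near1) (abs_near1V a_near1) Q_ne.
have [-> ->] : fqint abs p b fL = L /\ fqint abs p b^-1 fR = M.
  by split; apply: abs_limE.
have cvg_diff := abs_cvgD (abs_cvgD cvgL (abs_cvg_cst (- c))) (abs_cvgZ (- b ^+ h.+2) cvgM).
have cvg0 : abs_cvg abs (fun n => qmean b fL (p ^ n) + - c + - b ^+ h.+2 * qmean b^-1 fR (p ^ n)) 0.
  apply: abs_cvg0_le (vanishing_qerr b_near1 a_near1) _ => n n_gt0.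
  rewrite mulNr reflect_qmean_le ?oddX ?p_odd ?orbT //.
  by rewrite -[1%N](expn0 p) ltn_exp2l ?prime_gt1.
by apply/eqP; rewrite -subr_eq0 -(abs_cvg_uniq cvg_diff cvg0); apply/eqP; ring.
Qed.

End Reflection.

Lemma Gnum_fqint b alpha h m : Gnum abs p b alpha h.+1 m.+1 / m.+1%:R
  = fqint abs p b (qweighted b (b ^+ alpha) h (fun y => y ^+ m)).
Proof. by rewrite /Gnum subSS subn0 mulrC mulKf ?abs_natS_neq0. Qed.

Lemma fqint_qweighted_sum b a h (I : Type) (r : seq I) (c : I -> K) (e : I -> nat) :
  abs (b - 1) < 1 -> abs (a - 1) < 1 ->
  fqint abs p b (qweighted b a h (fun y => \sum_(i <- r) c i * y ^+ e i))
  = \sum_(i <- r) c i * fqint abs p b (qweighted b a h (fun y => y ^+ e i)).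
Proof.
move=> b1 a1; pose g i := qweighted b a h (fun y => y ^+ e i).
have cvg_g i : abs_cvg abs (fun n => qmean b (g i) (p ^ n)) (fqint abs p b (g i)).
  by apply: abs_cvg_lim; apply: qweighted_cvg => //; apply: nonexpansiveX.
have -> : qweighted b a h (fun y => \sum_(i <- r) c i * y ^+ e i)
    = fun xi => \sum_(i <- r) c i * g i xi.
  by apply: funext => xi; rewrite /g /qweighted mulr_sumr; apply: eq_bigr => i _; ring.
apply: (abs_limE (u := fun n => qmean b _ (p ^ n))); under eq_fun do rewrite qmean_sum.
by apply: abs_cvg_sum => i; apply: abs_cvgZ.
Qed.

Lemma fqint_reflect_binomial b a h m n : abs (b - 1) < 1 -> abs (a - 1) < 1 -> (0 < n)%N ->
  \sum_(l < n.+1) 'C(n, l)%:R * (-1) ^+ l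
      * fqint abs p b (qweighted b a h (fun y => y ^+ (l + m)))
  = (1 + b) * (m == 0%N)%:R + b ^+ h.+2 * \sum_(l < m.+1) 'C(m, l)%:R * (-1) ^+ (m + l)
      * fqint abs p b^-1 (qweighted b^-1 a^-1 h (fun y => y ^+ (n + m - l))).
Proof.
move=> b1 a1 n_gt0; pose Q (y : K) := (1 - y) ^+ m * y ^+ n.
have Q_ne : unit_nonexpansive Q.
  apply: (nonexpansiveM (Q1 := fun y => (1 - y) ^+ m)); last exact: nonexpansiveX.
  exact: nonexpansive_1sub (nonexpansiveX _).
have := fqint_reflect h b1 a1 Q_ne.
have -> : Q 0 = 0 by rewrite /Q expr0n gtn_eqF // mulr0.
have -> : Q 1 = (m == 0%N)%:R by rewrite /Q subrr expr0n expr1n mulr1.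
have -> : (fun y => Q (1 - y))
    = fun y => \sum_(l < n.+1) 'C(n, l)%:R * (-1) ^+ l * y ^+ (l + m).
  by apply: funext => y; rewrite /Q subKr exprX_mul1sub.
have -> : Q = fun y => \sum_(l < m.+1) 'C(m, l)%:R * (-1) ^+ (m + l) * y ^+ (n + m - l).
  by apply: funext => y; rewrite /Q expr1sub_mulX.
have [bV1 aV1] := (abs_near1V b1, abs_near1V a1).
by rewrite !fqint_qweighted_sum // mulr0 subr0.
Qed.

End PadicAbs.

Theorem mainTheorem7 (p : nat) (R : realType) (K : closedFieldType) (abs : K -> R)
  (hp : prime p) (hodd : odd p) (habs : padic_abs p abs)
  (q : K) (hq : abs (q - 1) < 1) (alpha h : nat) (hh : (0 < h)%N)
  (n1 n2 k : nat) (hk : (2 * k < n1 + n2)%N) :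
  \sum_(l < (n1 + n2 - 2 * k).+1)
     ('C(n1 + n2 - 2 * k, l)%:R * (-1) ^+ l *
      (Gnum abs p q alpha h (l + 2 * k + 1) / (l + 2 * k + 1)%:R))
  = if k == 0%N then
      (1 + q) + q ^+ (h + 1) *
        (Gnum abs p q^-1 alpha h (n1 + n2 + 1) / (n1 + n2 + 1)%:R)
    else
      \sum_(l < (2 * k).+1)
        ('C(2 * k, l)%:R * (-1) ^+ (2 * k + l) *
         ((1 + q) + q ^+ (h + 1) *
           (Gnum abs p q^-1 alpha h (n1 + n2 - l + 1) / (n1 + n2 - l + 1)%:R))).
Proof.
case: h hh => [//|h] _; set n := (n1 + n2 - 2 * k)%N.
rewrite (_ : (n1 + n2 = n + 2 * k)%N); last by rewrite /n; lia.
have absq1 : abs q <= 1 by rewrite (abs_near1 habs hq).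
have qa1 := le_lt_trans (abs_subX1 habs alpha absq1) hq.
under eq_bigr do rewrite addn1 (Gnum_fqint habs hp).
rewrite (fqint_reflect_binomial habs hp hodd) //; last by rewrite /n; lia.
rewrite !addn1 muln_eq0 /=; case: eqP => [-> | /eqP k0].
  by rewrite big_ord1 mulr1 bin0 expr0 !mul1r (Gnum_fqint habs hp q^-1) exprVn subn0.
under [in RHS]eq_bigr do rewrite addn1 (Gnum_fqint habs hp q^-1) exprVn mulrDr mulrCA.
rewrite mulr0 add0r big_split -mulr_suml -mulr_sumr sum_binom_signr ?muln_gt0 ?lt0n //=.
by rewrite mul0r add0r.
Qed.
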